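(* Let $m\ge 2$ and let $X(0),X(1),\dots$ be i.i.d. random vectors in $\mathbb{R}^m$ whose components satisfy $X_{\min,i}\le X_i(k)\le X_{\max,i}$ almost surely, where $X_{\max,i}<\infty$ and $X_{\min,i}>-1$, and where at least one component is riskless, i.e. equal to a constant $r\ge 0$ almost surely. Fix an integer $n\ge 1$, let $\mathcal{X}_{n,i}:=\prod_{k=0}^{n-1}(1+X_i(k))-1$, $\mathcal{X}_n=(\mathcal{X}_{n,1},\dots,\mathcal{X}_{n,m})^T$, $\mathcal{K}:=\{K\in\mathbb{R}^m: K_i\ge 0,\ \sum_i K_i=1\}$ and $g_n(K):=\frac{1}{n}\mathbb{E}[\log(1+K^T\mathcal{X}_n)]$. Let $j\in\{1,\dots,m\}$ and let $e_j$ be the $j$th standard unit vector. Then $e_j$ is a maximizer of $g_n$ over $\mathcal{K}$ if and only if $$\mathbb{E}\left[\frac{1+X_i(0)}{1+X_j(0)}\right]\le 1\quad\text{for every } i\neq j.$$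
   Context: $X_i(k)$ is the return of asset $i$ at step $k$; components may be arbitrarily correlated. $n$ is the number of steps between rebalancings. A maximizer of $g_n$ over $\mathcal{K}$ is called a Kelly optimal feedback gain. *)

From HB Require Import structures.
From mathcomp Require Import all_boot all_order all_algebra.
From mathcomp Require Import all_classical all_reals all_analysis.
Set Implicit Arguments. Unset Strict Implicit. Unset Printing Implicit Defensive.
Import Order.TTheory GRing.Theory Num.Theory.
Local Open Scope classical_set_scope.
Local Open Scope ring_scope.

Section kelly.
Context {d : measure_display} {T : measurableType d} {R : realType}.
Variables (P : probability T R) (m : nat).

(* X k i : return of asset i at step k, as a function on the sample space *)
Definition vec_event (Y : 'I_m -> T -> R) (B : 'I_m -> set R) : set T :=
  [set x | forall i, B i (Y i x)].

(* Independence and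
   identical distribution are stated on the generating pi-system of
   measurable rectangles  {X(k) in B_1 x ... x B_m}.  Taking B k = setT for
   the indices not involved yields the product rule over every finite
   subfamily. *)
Definition iid_vectors (X : nat -> 'I_m -> T -> R) : Prop :=
  [/\ (forall k i, measurable_fun setT (X k i)),
      (forall (N : nat) (B : nat -> 'I_m -> set R),
          (forall k i, measurable (B k i)) ->
          P [set x | forall k, (k < N)%N -> forall i, B k i (X k i x)]
          = (\prod_(k < N) P (vec_event (X k) (B k)))%E)
    & (forall k (B : 'I_m -> set R), (forall i, measurable (B i)) ->
          P (vec_event (X k) B) = P (vec_event (X 0%N) B))].

Definition Xcal (X : nat -> 'I_m -> T -> R) (n : nat) (i : 'I_m) (x : T) : R :=
  \prod_(k < n) (1 + X k i x) - 1.

Definition simplexK (K : 'I_m -> R) : Prop :=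
  (forall i, 0 <= K i) /\ \sum_(i < m) K i = 1.

Definition g_n (X : nat -> 'I_m -> T -> R) (n : nat) (K : 'I_m -> R) : \bar R :=
  ((n%:R)^-1)%:E * 'E_P[fun x => ln (1 + \sum_(i < m) K i * Xcal X n i x)].

Definition unit_vec (j : 'I_m) : 'I_m -> R := fun i => if i == j then 1 else 0.

End kelly.

(* Let W_l = prod_(k < n) (1 + X_l(k)) be the gross return of asset l over n
   steps, so that g_n(K) = E[ln (sum_l K_l W_l)] / n.  Since ln y <= y - 1,
   E[ln (sum_l K_l W_l)] - E[ln W_j] <= sum_l K_l E[W_l / W_j] - 1, and by
   independence E[W_l / W_j] = E[(1 + X_l(0)) / (1 + X_j(0))]^n: the ratio
   condition makes e_j optimal.  Conversely, if that ratio exceeds 1 for some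
   i, moving a small weight t from j to i changes E[ln wealth] by at least
   t (E[W_i / W_j] - 1) - O(t^2) > 0, because ln (1 + u) >= u - 2 u^2 for
   u >= -1/2.
   Independence is only assumed on rectangles {X(k) in B_1 x ... x B_m}, so the
   factorisation E[prod_k phi(X_i(k)) psi(X_j(k))] = E[phi(X_i(0)) psi(X_j(0))]^N
   is first proved for step functions on rectangles and then extended to
   bounded phi, psi >= 0 by uniform staircase approximation.  Returns are
   clamped to [Xmin, Xmax], which changes nothing almost surely and makes all
   the functions involved bounded. *)

From HB Require Import structures.
From mathcomp Require Import all_boot all_order all_algebra.
From mathcomp Require Import all_classical all_reals all_analysis.
From mathcomp Require Import measurable_realfun ring lra.
Import Order.TTheory GRing.Theory Num.Theory.
Local Open Scope classical_set_scope.
Local Open Scope ring_scope.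

Section real_estimates.
Context {R : realFieldType}.

Lemma ler_norm_prodB N (a b : 'I_N -> R) (C e : R) : 1 <= C ->
  (forall k, `|a k| <= C) -> (forall k, `|b k| <= C) -> (forall k, `|a k - b k| <= e) ->
  `|\prod_(k < N) a k - \prod_(k < N) b k| <= N%:R * C ^+ N * e.
Proof.
move=> C_ge1; elim: N a b => [|N IH] a b aC bC abe.
  by rewrite !big_ord0 subrr normr0 !mul0r.
rewrite !big_ord_recr /=.
set pa := \prod_(k < N) _; set pb := \prod_(k < N) _.
have paC : `|pa| <= C ^+ N.
  rewrite normr_prod -[N in C ^+ N]card_ord -prodr_const.
  by apply: ler_prod => k _; rewrite normr_ge0 aC.
have pab : `|pa - pb| <= N%:R * C ^+ N * e by apply: IH.
have e_ge0 : 0 <= e := le_trans (normr_ge0 _) (abe ord0).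
have -> : pa * a ord_max - pb * b ord_max =
    pa * (a ord_max - b ord_max) + (pa - pb) * b ord_max by ring.
apply: le_trans (ler_normD _ _) _; rewrite !normrM.
have CN_ge0 : 0 <= C ^+ N by rewrite exprn_ge0 // (le_trans ler01).
have h1 : `|pa| * `|a ord_max - b ord_max| <= C ^+ N * e by apply: ler_pM.
have h2 : `|pa - pb| * `|b ord_max| <= N%:R * C ^+ N * e * C by apply: ler_pM.
have h3 : C ^+ N * e <= C * C ^+ N * e by rewrite ler_wpM2r // ler_peMl.
rewrite exprS -natr1 [X in _ <= X](_ : _ = N%:R * (C * C ^+ N * e) + C * C ^+ N * e); last by ring.
lra.
Qed.

(* A sum of indicators, so that a product of staircases of phi and psi is a
   step function on rectangles. *)
Definition stair (L : nat) (h v : R) : R := h * \sum_(l < L) ((l.+1)%:R * h <= v)%R%:R.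

Lemma stair_ge0 L h v : 0 <= h -> 0 <= stair L h v.
Proof. by move=> h_ge0; rewrite mulr_ge0 // sumr_ge0. Qed.

Lemma stair_bounds L h v : 0 <= h -> 0 <= v -> v <= L%:R * h ->
  v - h <= stair L h v <= v.
Proof.
move=> h_ge0 v_ge0; suff : [/\ stair L h v <= v, stair L h v <= L%:R * h
    & v - h <= stair L h v \/ L%:R * h <= stair L h v].
  by case=> ? ? [|] ? ?; apply/andP; split; lra.
elim: L => [|L [IHv IHL IHlo]].
  by rewrite /stair big_ord0 mulr0 mul0r; split => //; right.
rewrite /stair big_ord_recr /= mulrDr -/(stair L h v) -natr1.
have [Lv | vL] := leP ((L%:R + 1) * h) v; rewrite /= ?mulr1 ?mulr0 ?addr0.
  by split; [lra | lra | case: IHlo => ?; [left | right]; lra].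
by split; [lra | lra | left; case: IHlo; lra].
Qed.

Lemma stair_div_bounds L [M v : R] : 0 <= v <= M ->
  v - M / L.+1%:R <= stair L.+1 (M / L.+1%:R) v <= v.
Proof.
case/andP=> v_ge0 vM; have M_ge0 := le_trans v_ge0 vM.
apply: stair_bounds => //; first by rewrite divr_ge0.
by rewrite mulrC divfK ?pnatr_eq0.
Qed.

Lemma exists_small_gain [a b : R] : 0 < a -> 0 < b ->
  exists2 t, 0 < t <= 1/2 & 0 < t * a - t ^+ 2 * b.
Proof.
move=> a_gt0 b_gt0; set t := Num.min (1/2) (a / (2 * b)).
have t_gt0 : 0 < t.
  by rewrite lt_min; apply/andP; split; [lra | apply: divr_gt0 => //; lra].
have tb : t * b <= a / 2.
  have -> : a / 2 = a / (2 * b) * b by field; rewrite gt_eqF.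
  by apply: ler_wpM2r; [exact: ltW | rewrite /t ge_min lexx orbT].
exists t; first by rewrite t_gt0 /t ge_min lexx.
by rewrite expr2; nra.
Qed.

End real_estimates.

Lemma eq_of_norm_le_invn {R : archiRealFieldType} (x y K : R) :
  (forall L : nat, `|x - y| <= K / L.+1%:R) -> x = y.
Proof.
move=> xyK; apply/eqP; rewrite -subr_eq0 -normr_le0; apply/ler_addgt0Pr => e e_gt0.
have /archi_boundP : 0 <= `|K| / e by rewrite divr_ge0 // ltW.
set L := Num.Def.archi_bound _ => KL.
have KeL : K / e <= L.+1%:R.
  apply: le_trans (ler_wpM2r _ (ler_norm K)) _; first by rewrite invr_ge0 ltW.
  by apply/ltW/(lt_le_trans KL); rewrite ler_nat.
by apply: le_trans (xyK L) _; rewrite add0r ler_pdivrMr // mulrC -ler_pdivrMr.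
Qed.

Section clamp.
Context {R : realDomainType}.

Definition clamp (a b y : R) := Num.max (Num.min y b) a.

Lemma clamp_ge a b y : a <= clamp a b y.
Proof. by rewrite le_max lexx orbT. Qed.

Lemma clamp_le a b y : clamp a b y <= Num.max b a.
Proof. by rewrite le_max2 // ge_min lexx orbT. Qed.

Lemma clamp_id a b y : a <= y <= b -> clamp a b y = y.
Proof. by case/andP=> ay yb; rewrite /clamp (min_idPl yb) (max_idPl ay). Qed.

Lemma clamp_homo a b : {homo clamp a b : x y / x <= y}.
Proof. by move=> x y xy; rewrite le_max2 // le_min2. Qed.

End clamp.

Section log_bounds.
Context {R : realType}.

Lemma ln_le_subr1 [y : R] : 0 < y -> ln y <= y - 1.
Proof. by move=> y_gt0; have := @le_ln1Dx R (y - 1); rewrite addrCA subrr addr0; apply; lra. Qed.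

Lemma ln1D_ge_quad [u : R] : -(1/2) <= u -> u - 2 * u ^+ 2 <= ln (1 + u).
Proof.
(* ln_le_subr1 at 1 / (1 + u) gives ln (1 + u) >= u / (1 + u), and
   u / (1 + u) >= u - 2 u^2 as soon as 1 / (1 + u) <= 2. *)
move=> u_ge; have u1_gt0 : 0 < 1 + u by lra.
have w_gt0 : 0 < (1 + u)^-1 by rewrite invr_gt0.
have := ln_le_subr1 w_gt0; rewrite lnV ?posrE //.
set w := (1 + u)^-1 in w_gt0 * => lnw.
have wu : w * (1 + u) = 1 by rewrite mulVf // gt_eqF.
have w_le2 : w <= 2.
  have : 0 <= w * (u + 1/2) by apply: mulr_ge0; [exact: ltW | lra].
  nra.
have : 0 <= u ^+ 2 * (2 - w) by rewrite mulr_ge0 ?sqr_ge0 //; lra.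
rewrite expr2; nra.
Qed.

End log_bounds.

Lemma measurable_inv {R : realType} : measurable_fun setT (@GRing.inv R).
Proof.
rewrite -(setvU [set 0]); apply/measurable_funU => //; first exact: measurableC.
split; last exact: measurable_fun_set1.
apply: open_continuous_measurable_fun.
  by rewrite openC; apply: accessible_closed_set1; apply: hausdorff_accessible; exact: norm_hausdorff.
by move=> x /set_mem /eqP x_neq0; exact: inv_continuous.
Qed.

Lemma measurable_superlevel {R : realType} (f : R -> R) (t : R) :
  measurable_fun setT f -> measurable [set y | t <= f y].
Proof.
move=> mf; have := mf measurableT _ (measurable_itv `[t, +oo[); rewrite setTI.
by congr measurable; apply/seteqP; split => y /=; rewrite in_itv /= andbT.
Qed.

Section bounded_measurable.
Context {d : measure_display} {T : measurableType d} {R : realType}.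
Implicit Types f g : T -> R.

Definition bounded_measurable f :=
  measurable_fun setT f /\ exists M : R, forall x, `|f x| <= M.

Lemma bounded_measurable_cst (c : R) : bounded_measurable (fun=> c).
Proof. by split; [exact: measurable_cst | exists `|c|]. Qed.

Lemma bounded_measurableD [f g] : bounded_measurable f -> bounded_measurable g ->
  bounded_measurable (fun x => f x + g x).
Proof.
move=> [mf [M fM]] [mg [N gN]]; split; first exact: measurable_funD.
by exists (M + N) => x; apply: le_trans (ler_normD _ _) _; apply: lerD.
Qed.

Lemma bounded_measurableM [f g] : bounded_measurable f -> bounded_measurable g ->
  bounded_measurable (fun x => f x * g x).
Proof.
move=> [mf [M fM]] [mg [N gN]]; split; first exact: measurable_funM.
by exists (M * N) => x; rewrite normrM; apply: ler_pM.
Qed.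

Lemma bounded_measurable_indic (A : set T) : measurable A ->
  bounded_measurable (\1_A : T -> R).
Proof.
move=> mA; split; first exact: measurable_indic.
by exists 1 => x; rewrite indicE; case: (x \in A); rewrite ?normr1 ?normr0.
Qed.

Lemma bounded_measurable_sum (I : Type) (s : seq I) (F : I -> T -> R) :
  (forall i, bounded_measurable (F i)) ->
  bounded_measurable (fun x => \sum_(i <- s) F i x).
Proof.
move=> bF; elim: s => [|a s IH].
  by under eq_fun do rewrite big_nil; exact: bounded_measurable_cst.
by under eq_fun do rewrite big_cons; exact: bounded_measurableD.
Qed.

Lemma bounded_measurable_prod (I : Type) (s : seq I) (F : I -> T -> R) :
  (forall i, bounded_measurable (F i)) ->
  bounded_measurable (fun x => \prod_(i <- s) F i x).
Proof.
move=> bF; elim: s => [|a s IH].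
  by under eq_fun do rewrite big_nil; exact: bounded_measurable_cst.
by under eq_fun do rewrite big_cons; exact: bounded_measurableM.
Qed.

Lemma bounded_measurable_ln [f] [c : R] : bounded_measurable f -> 0 < c ->
  (forall x, c <= f x) -> bounded_measurable (fun x => ln (f x)).
Proof.
move=> [mf [M fM]] c_gt0 cf; split.
  by apply: measurableT_comp => //; exact: measurable_ln.
exists (`|ln c| + `|ln M|) => x.
have fx_gt0 : 0 < f x := lt_le_trans c_gt0 (cf x).
have fxM : f x <= M := le_trans (ler_norm _) (fM x).
have lnc : ln c <= ln (f x) by rewrite ler_ln ?posrE.
have lnM : ln (f x) <= ln M by rewrite ler_ln ?posrE // (lt_le_trans fx_gt0).
have c_lo : - `|ln c| <= ln c := lerNnormlW (lexx _).
have M_hi : ln M <= `|ln M| := ler_norm _.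
have := normr_ge0 (ln c); have := normr_ge0 (ln M).
by rewrite ler_norml => *; apply/andP; split; lra.
Qed.

Lemma bounded_measurableV [f] [c : R] : bounded_measurable f -> 0 < c ->
  (forall x, c <= f x) -> bounded_measurable (fun x => (f x)^-1).
Proof.
move=> [mf _] c_gt0 cf; split; first exact: measurableT_comp measurable_inv mf.
exists c^-1 => x; have fx_gt0 := lt_le_trans c_gt0 (cf x).
by rewrite ger0_norm ?invr_ge0 ?(ltW fx_gt0) // lef_pV2 ?posrE.
Qed.

End bounded_measurable.

Section bounded_expectation.
Context {d : measure_display} {T : measurableType d} {R : realType}.
Variable P : probability T R.
Implicit Types f g : T -> R.

Definition expectr f : R := fine ('E_P[f])%E.

Lemma bounded_measurable_integrable [f] : bounded_measurable f ->
  P.-integrable setT (EFin \o f).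
Proof.
move=> [mf [M fM]]; apply: measurable_bounded_integrable => //.
  exact: le_lt_trans (probability_le1 P measurableT) (ltry _).
rewrite /bounded_near; near=> K => x _ /=; apply: le_trans (fM x) _.
by near: K; apply: nbhs_pinfty_ge; exact: num_real.
Unshelve. all: by end_near.
Qed.

Lemma expectrE f : bounded_measurable f -> ('E_P[f])%E = (expectr f)%:E.
Proof.
move=> bf; rewrite /expectr fineK // unlock.
exact: (integrable_fin_num measurableT (bounded_measurable_integrable bf)).
Qed.

Lemma expectr_cst c : expectr (fun=> c) = c.
Proof. by rewrite /expectr expectation_cst. Qed.

Lemma expectr_indic (A : set T) : measurable A -> expectr (\1_A) = fine (P A).
Proof. by move=> mA; rewrite /expectr expectation_indic. Qed.

Lemma expectrD f g : bounded_measurable f -> bounded_measurable g ->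
  expectr (fun x => f x + g x) = expectr f + expectr g.
Proof.
move=> bf bg; apply: EFin_inj.
rewrite EFinD -!expectrE //; last exact: bounded_measurableD.
rewrite !unlock; apply: integralD_EFin => //; exact: bounded_measurable_integrable.
Qed.

Lemma expectrZl k f : bounded_measurable f ->
  expectr (fun x => k * f x) = k * expectr f.
Proof.
move=> bf; apply: EFin_inj.
rewrite EFinM -!expectrE //; last exact: bounded_measurableM (bounded_measurable_cst _) bf.
rewrite !unlock; exact: (integralZl measurableT (bounded_measurable_integrable bf)).
Qed.

Lemma expectr_sum (I : Type) (s : seq I) (F : I -> T -> R) :
  (forall i, bounded_measurable (F i)) ->
  expectr (fun x => \sum_(i <- s) F i x) = \sum_(i <- s) expectr (F i).
Proof.
move=> bF; elim: s => [|a s IH].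
  by under eq_fun do rewrite big_nil; rewrite big_nil expectr_cst.
under eq_fun do rewrite big_cons.
by rewrite big_cons expectrD ?IH //; exact: bounded_measurable_sum.
Qed.

Lemma ler_expectr [f g] : bounded_measurable f -> bounded_measurable g ->
  (forall x, f x <= g x) -> expectr f <= expectr g.
Proof.
move=> bf bg fg; rewrite -lee_fin -!expectrE // !unlock.
apply: le_integral => //; try exact: bounded_measurable_integrable.
by move=> x _; rewrite lee_fin.
Qed.

Lemma ler_norm_expectr f e : bounded_measurable f ->
  (forall x, `|f x| <= e) -> `|expectr f| <= e.
Proof.
move=> bf fe; have := ler_expectr (bounded_measurable_cst (- e)) bf.
have := ler_expectr bf (bounded_measurable_cst e); rewrite !expectr_cst ler_norml.
by move=> hi lo; rewrite hi ?lo // => x; have := fe x; rewrite ler_norml => /andP[].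
Qed.

Lemma ler_norm_expectrB f g e : bounded_measurable f -> bounded_measurable g ->
  (forall x, `|f x - g x| <= e) -> `|expectr f - expectr g| <= e.
Proof.
move=> bf bg fge; have bNg := bounded_measurableM (bounded_measurable_cst (-1)) bg.
have := @ler_norm_expectr (fun x => f x + -1 * g x) e (bounded_measurableD bf bNg).
by rewrite expectrD // expectrZl // !mulN1r; apply => x; rewrite mulN1r.
Qed.

Lemma expectr_ge0 f : bounded_measurable f -> (forall x, 0 <= f x) -> 0 <= expectr f.
Proof.
by move=> bf f0; rewrite -(expectr_cst 0); apply: ler_expectr => //; exact: bounded_measurable_cst.
Qed.

Lemma expectation_ae_eq f g : measurable_fun setT f -> measurable_fun setT g ->
  {ae P, forall x, f x = g x} -> ('E_P[f] = 'E_P[g])%E.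
Proof.
move=> mf mg fg; rewrite !unlock; apply: ae_eq_integral => //.
- exact/measurable_EFinP.
- exact/measurable_EFinP.
- by apply: filterS fg => x /= ->.
Qed.

End bounded_expectation.

(** * Products over i.i.d. random vectors *)

Lemma prod_indic {T : Type} {R : comPzRingType} (I : finType) (E : I -> set T) x :
  \prod_(i : I) (\1_(E i) x : R) = \1_[set y | forall i, E i y] x.
Proof.
rewrite indicE; have [/set_mem allE | /negP notallE] := boolP (x \in _).
  by apply: big1 => i _; rewrite indicE mem_set.
have [i Ei] : exists i, ~ E i x.
  by apply/existsNP => allE; apply: notallE; exact/mem_set.
by rewrite (bigD1 i) //= indicE memNset // mul0r.
Qed.

Lemma measurable_forall_fin {d : measure_display} {T : measurableType d}
  (I : finType) (E : I -> set T) : (forall i, measurable (E i)) ->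
  measurable [set x | forall i, E i x].
Proof.
move=> mE; have -> : [set x | forall i, E i x] = \bigcap_(i in setT) E i.
  by apply/seteqP; split => x /= Ex i; [move=> _ | ]; apply: Ex.
by apply: fin_bigcap_measurable => [|i _]; [exact: finite_finset | exact: mE].
Qed.

Section rectangle_step_functions.
Context {d : measure_display} {T : measurableType d} {R : realType}.
Context (P : probability T R) {m : nat} (X : nat -> 'I_m -> T -> R).
Hypothesis iidX : iid_vectors P X.

Lemma measurable_vec_event k (B : 'I_m -> set R) : (forall i, measurable (B i)) ->
  measurable (vec_event (X k) B).
Proof.
move=> mB; apply: measurable_forall_fin => i.
by case: iidX => mX _ _; have := mX k i measurableT _ (mB i); rewrite setTI.
Qed.

Lemma prob_vec_events N (B : 'I_N -> 'I_m -> set R) :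
  (forall k i, measurable (B k i)) ->
  P [set x | forall k : 'I_N, vec_event (X k) (B k) x] =
  (\prod_(k < N) P (vec_event (X k) (B k)))%E.
Proof.
(* [iid_vectors] speaks of nat-indexed families: extend [B] by [setT] beyond [N]. *)
move=> mB; pose B' k : 'I_m -> set R := if insub k is Some k' then B k' else fun=> setT.
have B'E (k : 'I_N) : B' k = B k by rewrite /B' valK.
case: iidX => _ indep _; rewrite (eq_bigr (fun k : 'I_N => P (vec_event (X k) (B' k)))); last first.
  by move=> k _; rewrite B'E.
rewrite -indep => [|k i]; last by rewrite /B'; case: insub => [k'|]; [exact: mB | exact: measurableT].
congr (P _); apply/seteqP; split => x /= Bx.
  by move=> k kN i; have := Bx (Ordinal kN) i; rewrite -B'E.
by move=> k i; rewrite -B'E; exact: Bx.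
Qed.

Context {A : finType} (c : A -> R) (B : A -> 'I_m -> set R).
Hypothesis mB : forall a i, measurable (B a i).

Definition rect_step k x := \sum_(a : A) c a * \1_(vec_event (X k) (B a)) x.

Let mE k a : measurable (vec_event (X k) (B a)).
Proof. exact: measurable_vec_event. Qed.

Let bounded_measurable_term k a :
  bounded_measurable (fun x => c a * \1_(vec_event (X k) (B a)) x).
Proof.
by apply: bounded_measurableM; [exact: bounded_measurable_cst | exact: bounded_measurable_indic].
Qed.

Lemma bounded_measurable_rect_step k : bounded_measurable (rect_step k).
Proof. exact: bounded_measurable_sum. Qed.

Lemma expectr_rect_step k :
  expectr P (rect_step k) = \sum_(a : A) c a * fine (P (vec_event (X k) (B a))).
Proof.
rewrite expectr_sum //; apply: eq_bigr => a _.
by rewrite expectrZl ?expectr_indic //; exact: bounded_measurable_indic.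
Qed.

Lemma expectr_rect_step_shift k : expectr P (rect_step k) = expectr P (rect_step 0).
Proof.
rewrite !expectr_rect_step; apply: eq_bigr => a _.
by case: iidX => _ _ ->.
Qed.

Lemma expectr_prod_rect_step N :
  expectr P (fun x => \prod_(k < N) rect_step k x) = \prod_(k < N) expectr P (rect_step k).
Proof.
pose E (f : {ffun 'I_N -> A}) := [set x | forall k : 'I_N, vec_event (X k) (B (f k)) x].
have mEf f : measurable (E f).
  by apply: measurable_forall_fin => k; exact: mE.
have expand x : \prod_(k < N) rect_step k x =
    \sum_(f : {ffun 'I_N -> A}) (\prod_(k < N) c (f k)) * \1_(E f) x.
  by rewrite bigA_distr_bigA; apply: eq_bigr => f _; rewrite big_split /= prod_indic.
under eq_fun do rewrite expand.
under [RHS]eq_bigr do rewrite expectr_rect_step.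
rewrite bigA_distr_bigA expectr_sum => [|f]; last first.
  by apply: bounded_measurableM; [exact: bounded_measurable_cst | exact: bounded_measurable_indic].
apply: eq_bigr => f _; rewrite expectrZl ?expectr_indic //; last exact: bounded_measurable_indic.
rewrite big_split /=; congr (_ * _); rewrite prob_vec_events //.
rewrite (eq_bigr (fun k : 'I_N => (fine (P (vec_event (X k) (B (f k)))))%:E)) ?prodEFin //.
by move=> k _; rewrite fineK // fin_num_measure.
Qed.

End rectangle_step_functions.

Section iid_coordinate_products.
Context {d : measure_display} {T : measurableType d} {R : realType}.
Context (P : probability T R) {m : nat} (X : nat -> 'I_m -> T -> R).
Hypothesis iidX : iid_vectors P X.
Variables (phi psi : R -> R) (Mphi Mpsi : R) (i j : 'I_m).
Hypotheses (mphi : measurable_fun setT phi) (mpsi : measurable_fun setT psi).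
Hypotheses (phi_ge0 : forall y, 0 <= phi y) (phi_le : forall y, phi y <= Mphi).
Hypotheses (psi_ge0 : forall y, 0 <= psi y) (psi_le : forall y, psi y <= Mpsi).

Definition coord_prod k x := phi (X k i x) * psi (X k j x).

Let Mphi_ge0 : 0 <= Mphi. Proof. exact: le_trans (phi_ge0 0) (phi_le 0). Qed.
Let Mpsi_ge0 : 0 <= Mpsi. Proof. exact: le_trans (psi_ge0 0) (psi_le 0). Qed.
(* [ler_norm_prodB] needs a common bound that is at least 1. *)
Let C := 1 + Mphi * Mpsi.
Let C_ge1 : 1 <= C. Proof. by rewrite lerDl mulr_ge0. Qed.

Let norm_le_C a b : 0 <= a <= Mphi -> 0 <= b <= Mpsi -> `|a * b| <= C.
Proof.
case/andP=> a_ge0 aM /andP[b_ge0 bM]; rewrite ger0_norm ?mulr_ge0 //.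
by apply: le_trans (ler_pM _ _ aM bM) _; rewrite ?lerDr.
Qed.

Let norm_coord_prod_le k x : `|coord_prod k x| <= C.
Proof. by apply: norm_le_C; rewrite ?phi_ge0 ?phi_le ?psi_ge0 ?psi_le. Qed.

Lemma bounded_measurable_coord_prod k : bounded_measurable (coord_prod k).
Proof.
case: iidX => mX _ _; split; last by exists C; exact: norm_coord_prod_le.
by apply: measurable_funM; apply: measurableT_comp.
Qed.

Let bounds_phi k x : 0 <= phi (X k i x) <= Mphi.
Proof. by rewrite phi_ge0 phi_le. Qed.

Let bounds_psi k x : 0 <= psi (X k j x) <= Mpsi.
Proof. by rewrite psi_ge0 psi_le. Qed.

Section approximation.
Variable L : nat.
Let h := Mphi / L.+1%:R.
Let h' := Mpsi / L.+1%:R.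

Definition coord_prod_approx k x :=
  stair L.+1 h (phi (X k i x)) * stair L.+1 h' (psi (X k j x)).

Let level (l : 'I_L.+1 * 'I_L.+1) (q : 'I_m) : set R :=
  (if q == i then [set y | l.1.+1%:R * h <= phi y] else setT) `&`
  (if q == j then [set y | l.2.+1%:R * h' <= psi y] else setT).

Let measurable_level l q : measurable (level l q).
Proof.
by apply: measurableI; case: ifP => _; by [exact: measurable_superlevel | exact: measurableT].
Qed.

Let coord_prod_approxE k x :
  coord_prod_approx k x = rect_step X (fun=> h * h') level k x.
Proof.
rewrite /coord_prod_approx /stair mulrACA big_distrlr pair_bigA mulr_sumr.
apply: eq_bigr => -[l l'] _ /=; congr (_ * _); rewrite indicE.
have [hi|/negP hi] := boolP (l.+1%:R * h <= phi (X k i x));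
have [hj|/negP hj] := boolP (l'.+1%:R * h' <= psi (X k j x)); rewrite /= ?mulr1 ?mulr0 ?mul0r.
- by rewrite mem_set // => q; split; case: eqP => [->|].
- by rewrite memNset // => /(_ j) [_]; rewrite eqxx; exact: hj.
- by rewrite memNset // => /(_ i) []; rewrite eqxx => /hi.
- by rewrite memNset // => /(_ i) []; rewrite eqxx => /hi.
Qed.

Let approx_rect k : coord_prod_approx k = rect_step X (fun=> h * h') level k :=
  funext (coord_prod_approxE k).

Let bounded_measurable_approx k : bounded_measurable (coord_prod_approx k).
Proof. by rewrite approx_rect; exact: (bounded_measurable_rect_step _ _ iidX _ _ measurable_level). Qed.

Let approx_bounds k x :
  `|coord_prod_approx k x| <= C /\
  `|coord_prod k x - coord_prod_approx k x| <= (Mphi * Mpsi *+ 2) / L.+1%:R.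
Proof.
have /andP[a_ge0 aM] := bounds_phi k x; have /andP[b_ge0 bM] := bounds_psi k x.
have := stair_div_bounds L (bounds_phi k x); have := stair_div_bounds L (bounds_psi k x).
have := @stair_ge0 _ L.+1 h (phi (X k i x)) (divr_ge0 Mphi_ge0 (ler0n _ _)).
have := @stair_ge0 _ L.+1 h' (psi (X k j x)) (divr_ge0 Mpsi_ge0 (ler0n _ _)).
rewrite /coord_prod /coord_prod_approx -/h -/h'.
set a := phi _ in a_ge0 aM *; set b := psi _ in b_ge0 bM *.
set a' := stair _ h _; set b' := stair _ h' _ => b'_ge0 a'_ge0 /andP[b_ge b_le] /andP[a_ge a_le].
split; first by apply: norm_le_C; apply/andP; split => //; lra.
have -> : a * b - a' * b' = a * (b - b') + (a - a') * b' by ring.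
have -> : (Mphi * Mpsi *+ 2) / L.+1%:R = Mphi * h' + h * Mpsi.
  by rewrite /h /h' mulr2n; field; rewrite addrC natr1 pnatr_eq0.
have t1 : 0 <= a * (b - b') <= Mphi * h'.
  by rewrite mulr_ge0 ?subr_ge0 //= ler_pM // ?subr_ge0 //; lra.
have t2 : 0 <= (a - a') * b' <= h * Mpsi.
  by rewrite mulr_ge0 ?subr_ge0 //= ler_pM // ?subr_ge0 //; lra.
by rewrite ler_norml; apply/andP; split; lra.
Qed.

Let expectr_approx_shift k :
  expectr P (coord_prod_approx k) = expectr P (coord_prod_approx 0).
Proof. by rewrite !approx_rect; exact: expectr_rect_step_shift. Qed.

Let expectr_near k : `|expectr P (coord_prod k) - expectr P (coord_prod_approx k)|
  <= (Mphi * Mpsi *+ 2) / L.+1%:R.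
Proof.
apply: ler_norm_expectrB => [|//|x]; first exact: bounded_measurable_coord_prod.
exact: (approx_bounds k x).2.
Qed.

Lemma norm_expectr_coord_prod_shift k :
  `|expectr P (coord_prod k) - expectr P (coord_prod 0)|
  <= (Mphi * Mpsi *+ 2) / L.+1%:R *+ 2.
Proof.
apply: le_trans (ler_distD (expectr P (coord_prod_approx k)) _ _) _.
have near0 := expectr_near 0; have neark := expectr_near k.
rewrite -(expectr_approx_shift k) distrC in near0.
set e := (Mphi * Mpsi *+ 2) / _ in near0 neark *.
by rewrite mulr2n; lra.
Qed.

Lemma norm_expectr_prod_coord_prod N :
  `|expectr P (fun x => \prod_(k < N) coord_prod k x) - \prod_(k < N) expectr P (coord_prod k)|
  <= N%:R * C ^+ N * ((Mphi * Mpsi *+ 2) / L.+1%:R) *+ 2.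
Proof.
have bD := bounded_measurable_coord_prod; have bS := bounded_measurable_approx.
have prodS : expectr P (fun x => \prod_(k < N) coord_prod_approx k x) =
    \prod_(k < N) expectr P (coord_prod_approx k).
  under eq_fun do under eq_bigr do rewrite coord_prod_approxE.
  rewrite (expectr_prod_rect_step _ _ iidX _ _ measurable_level).
  by apply: eq_bigr => k _; rewrite approx_rect.
apply: le_trans (ler_distD (\prod_(k < N) expectr P (coord_prod_approx k)) _ _) _.
rewrite mulr2n; apply: lerD.
  rewrite -prodS; apply: ler_norm_expectrB => [||x].
  - by apply: bounded_measurable_prod => k; exact: bD.
  - by apply: bounded_measurable_prod => k; exact: bS.
  apply: ler_norm_prodB => [//|k|k|k]; first exact: norm_coord_prod_le.
    exact: (approx_bounds k x).1.
  exact: (approx_bounds k x).2.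
apply: ler_norm_prodB => [//|k|k|k].
- by apply: ler_norm_expectr => [|x]; [exact: bS | exact: (approx_bounds k x).1].
- by apply: ler_norm_expectr => [|x]; [exact: bD | exact: norm_coord_prod_le].
- by rewrite distrC; exact: expectr_near.
Qed.

End approximation.

Lemma expectr_coord_prod_shift k : expectr P (coord_prod k) = expectr P (coord_prod 0).
Proof.
apply: (@eq_of_norm_le_invn _ _ _ (Mphi * Mpsi *+ 2 *+ 2)) => L.
by apply: le_trans (norm_expectr_coord_prod_shift L k) _; rewrite -mulrnAl.
Qed.

Lemma expectr_prod_coord_prod N :
  expectr P (fun x => \prod_(k < N) coord_prod k x) = expectr P (coord_prod 0) ^+ N.
Proof.
have -> : expectr P (coord_prod 0) ^+ N = \prod_(k < N) expectr P (coord_prod k).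
  rewrite -[N in _ ^+ N]card_ord -prodr_const.
  by apply: eq_bigr => k _; rewrite expectr_coord_prod_shift.
apply: (@eq_of_norm_le_invn _ _ _ (N%:R * C ^+ N * (Mphi * Mpsi *+ 2) *+ 2)) => L.
by apply: le_trans (norm_expectr_prod_coord_prod L N) _; rewrite mulrA -mulrnAl.
Qed.

End iid_coordinate_products.

(** * Log-optimal portfolios *)

Section simplex.
Context {R : realType} {m : nat}.

Lemma sum_unit_vec (j : 'I_m) (F : 'I_m -> R) : \sum_(l < m) unit_vec j l * F l = F j.
Proof.
rewrite (bigD1 j) //= /unit_vec eqxx mul1r big1 ?addr0 // => l /negbTE ->.
by rewrite mul0r.
Qed.

Lemma simplex_unit_vec (j : 'I_m) : simplexK (unit_vec j : 'I_m -> R).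
Proof.
split=> [l|]; first by rewrite /unit_vec; case: eqP.
by under eq_bigr do rewrite -[unit_vec j _]mulr1; rewrite sum_unit_vec.
Qed.

Lemma simplex_mix (i j : 'I_m) (t : R) : 0 <= t <= 1 ->
  simplexK (fun l => (1 - t) * unit_vec j l + t * unit_vec i l).
Proof.
case/andP=> t_ge0 t_le1; split=> [l|].
  by rewrite /unit_vec; case: eqP; case: eqP; lra.
rewrite big_split /= -!mulr_sumr.
by rewrite (proj2 (simplex_unit_vec j)) (proj2 (simplex_unit_vec i)); ring.
Qed.

Lemma simplex_wsum_gt0 [K w : 'I_m -> R] : simplexK K -> (forall l, 0 < w l) ->
  0 < \sum_(l < m) K l * w l.
Proof.
case=> K_ge0 K1 w_gt0; have : \sum_(l < m) K l != 0 by rewrite K1 oner_neq0.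
rewrite psumr_neq0 // => /hasP[l _ /andP[_ Kl_gt0]].
rewrite (bigD1 l) //=; have := mulr_gt0 Kl_gt0 (w_gt0 l).
have : 0 <= \sum_(k < m | k != l) K k * w k.
  by apply: sumr_ge0 => k _; rewrite mulr_ge0 // ltW.
lra.
Qed.

End simplex.

Section log_optimal_portfolio.
Context {d : measure_display} {T : measurableType d} {R : realType}.
Context (P : probability T R) {m : nat} (W : 'I_m -> T -> R) (w : 'I_m -> R).
Hypotheses (bounded_measurable_W : forall l, bounded_measurable (W l))
  (w_gt0 : forall l, 0 < w l) (W_ge : forall l x, w l <= W l x).

Definition log_wealth (K : 'I_m -> R) x := ln (\sum_(l < m) K l * W l x).

Let W_gt0 l x : 0 < W l x. Proof. exact: lt_le_trans (w_gt0 l) (W_ge l x). Qed.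

Let wealth_ge K x : simplexK K -> \sum_(l < m) K l * w l <= \sum_(l < m) K l * W l x.
Proof. by case=> K_ge0 _; apply: ler_sum => l _; rewrite ler_wpM2l. Qed.

Lemma bounded_measurable_log_wealth [K] : simplexK K -> bounded_measurable (log_wealth K).
Proof.
move=> sK; apply: (bounded_measurable_ln _ (simplex_wsum_gt0 sK w_gt0)) => [|x]; last exact: wealth_ge.
  apply: bounded_measurable_sum => l; apply: bounded_measurableM => //.
  exact: bounded_measurable_cst.
Qed.

Let bounded_measurable_lnW l : bounded_measurable (fun x => ln (W l x)).
Proof. exact: bounded_measurable_ln (bounded_measurable_W l) (w_gt0 l) (W_ge l). Qed.

Lemma log_wealth_unit_vec j x : log_wealth (unit_vec j) x = ln (W j x).
Proof. by rewrite /log_wealth sum_unit_vec. Qed.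

Variable j : 'I_m.

Let bounded_measurable_rel l : bounded_measurable (fun x => W l x / W j x).
Proof.
apply: bounded_measurableM => //.
exact: bounded_measurableV (bounded_measurable_W j) (w_gt0 j) (W_ge j).
Qed.

Lemma expectr_log_wealth_le K : simplexK K ->
  (forall l, expectr P (fun x => W l x / W j x) <= 1) ->
  expectr P (log_wealth K) <= expectr P (log_wealth (unit_vec j)).
Proof.
move=> sK rel_le1.
pose gain x := \sum_(l < m) K l * (W l x / W j x) - 1.
have bm_terms l : bounded_measurable (fun x => K l * (W l x / W j x)).
  exact: bounded_measurableM (bounded_measurable_cst _) (bounded_measurable_rel l).
have bm_sum : bounded_measurable (fun x => \sum_(l < m) K l * (W l x / W j x)).
  by apply: bounded_measurable_sum.
have bm_gain : bounded_measurable gain.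
  by apply: bounded_measurableD => //; exact: bounded_measurable_cst.
have log_wealth_le x : log_wealth K x <= ln (W j x) + gain x.
  have S_gt0 := lt_le_trans (simplex_wsum_gt0 sK w_gt0) (wealth_ge K x sK).
  have := ln_le_subr1 (divr_gt0 S_gt0 (W_gt0 j x)).
  rewrite ln_div ?posrE // /gain /log_wealth mulr_suml.
  by under [X in _ -> _ <= _ + (X - 1)]eq_bigr do rewrite mulrA; lra.
apply: le_trans (ler_expectr P (bounded_measurable_log_wealth sK)
  (bounded_measurableD (bounded_measurable_lnW j) bm_gain) log_wealth_le) _.
rewrite expectrD // (funext (log_wealth_unit_vec j)) gerDl.
rewrite /gain expectrD ?expectr_cst ?expectr_sum //; last exact: bounded_measurable_cst.
rewrite subr_le0 -(proj2 sK); apply: ler_sum => l _.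
by rewrite expectrZl // ler_piMr ?(proj1 sK).
Qed.

Let mix i (t : R) l := (1 - t) * unit_vec j l + t * unit_vec i l.

Let log_wealth_mix_ge i t x : 0 <= t <= 1/2 ->
  ln (W j x) + (t * (W i x / W j x - 1) - 2 * (t * (W i x / W j x - 1)) ^+ 2)
  <= log_wealth (mix i t) x.
Proof.
case/andP=> t_ge0 t_le; have Wj_gt0 := W_gt0 j x.
have rel_ge0 : 0 <= W i x / W j x by rewrite divr_ge0 // ltW.
have mixE : \sum_(l < m) mix i t l * W l x = W j x * (1 + t * (W i x / W j x - 1)).
  under eq_bigr do rewrite mulrDl -!mulrA.
  by rewrite big_split /= -!mulr_sumr !sum_unit_vec; field; rewrite gt_eqF.
have u_ge : -(1/2) <= t * (W i x / W j x - 1) by have := mulr_ge0 t_ge0 rel_ge0; nra.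
by rewrite /log_wealth mixE lnM ?posrE ?lerD2l ?ln1D_ge_quad //; lra.
Qed.

Lemma exists_log_wealth_gt i : 1 < expectr P (fun x => W i x / W j x) ->
  exists2 K, simplexK K & expectr P (log_wealth (unit_vec j)) < expectr P (log_wealth K).
Proof.
set c := expectr P _ => c_gt1; have bm_rel := bounded_measurable_rel i.
have [_ [B relB]] := bm_rel; set B1 := `|B| + 1.
have rel_dev x : (W i x / W j x - 1) ^+ 2 <= B1 ^+ 2.
  have rel_ge0 : 0 <= W i x / W j x by rewrite divr_ge0 // ltW.
  have rel_le : W i x / W j x <= `|B| := le_trans (le_trans (ler_norm _) (relB x)) (ler_norm B).
  have : 0 <= (`|B| - W i x / W j x + 2) * (`|B| + W i x / W j x) by apply: mulr_ge0; lra.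
  by rewrite /B1 !expr2; nra.
have c1_gt0 : 0 < c - 1 by rewrite subr_gt0.
have B1_gt0 : 0 < 2 * B1 ^+ 2 by rewrite mulr_gt0 ?exprn_gt0 // ltr_pwDr.
have [t /andP[t_gt0 t_le] gain_gt0] := exists_small_gain c1_gt0 B1_gt0.
have t_range : 0 <= t <= 1/2 by rewrite ltW.
exists (mix i t); first by apply: simplex_mix; apply/andP; split; lra.
pose lower x := ln (W j x) + (t * (W i x / W j x) + (- t - 2 * t ^+ 2 * B1 ^+ 2)).
have bm_lin : bounded_measurable (fun x => t * (W i x / W j x) + (- t - 2 * t ^+ 2 * B1 ^+ 2)).
  apply: bounded_measurableD (bounded_measurable_cst _).
  exact: bounded_measurableM (bounded_measurable_cst _) bm_rel.
have lower_le x : lower x <= log_wealth (mix i t) x.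
  apply: le_trans (log_wealth_mix_ge i t x t_range); rewrite /lower lerD2l.
  have : (t * (W i x / W j x - 1)) ^+ 2 <= t ^+ 2 * B1 ^+ 2.
    by rewrite exprMn ler_wpM2l ?sqr_ge0.
  lra.
have bm_mix : bounded_measurable (log_wealth (mix i t)).
  by apply: bounded_measurable_log_wealth; apply: simplex_mix; apply/andP; split; lra.
apply: lt_le_trans (ler_expectr P (bounded_measurableD (bounded_measurable_lnW j) bm_lin) bm_mix lower_le).
rewrite (funext (log_wealth_unit_vec j)) expectrD // expectrD ?expectrZl ?expectr_cst //.
- by rewrite -/c ltrDl; lra.
- exact: bounded_measurableM (bounded_measurable_cst _) bm_rel.
- exact: bounded_measurable_cst.
Qed.

End log_optimal_portfolio.

(** * The Kelly criterion *)

Section kelly_criterion.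
Context {d : measure_display} {T : measurableType d} {R : realType}.
Context (P : probability T R) {m : nat} (X : nat -> 'I_m -> T -> R).
Context (Xmin Xmax : 'I_m -> R) (n : nat) (j : 'I_m).
Hypotheses (iidX : iid_vectors P X) (Xmin_gt : forall i, -1 < Xmin i)
  (X_bounds : forall k i, {ae P, forall x, Xmin i <= X k i x <= Xmax i})
  (n_gt0 : (0 < n)%N).

Let gross l y := 1 + clamp (Xmin l) (Xmax l) y.
Let wealth l x := \prod_(k < n) gross l (X k l x).
Let rel_gross l := coord_prod X (gross l) (fun y => (gross j y)^-1) l j.

Let gross_ge l y : 1 + Xmin l <= gross l y.
Proof. by rewrite lerD2l clamp_ge. Qed.

Let gross_gt0 l y : 0 < gross l y.
Proof. by apply: lt_le_trans (gross_ge l y); have := Xmin_gt l; lra. Qed.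

Let gross_le l y : gross l y <= 1 + Num.max (Xmax l) (Xmin l).
Proof. by rewrite lerD2l clamp_le. Qed.

Let measurable_gross l : measurable_fun setT (gross l).
Proof. by apply: nondecreasing_measurable => // y z yz; rewrite lerD2l clamp_homo. Qed.

Let measurable_inv_gross : measurable_fun setT (fun y => (gross j y)^-1).
Proof. exact: measurableT_comp measurable_inv (measurable_gross j). Qed.

Let gross_ge0 l y : 0 <= gross l y. Proof. exact/ltW/gross_gt0. Qed.

Let inv_gross_ge0 y : 0 <= (gross j y)^-1. Proof. by rewrite invr_ge0. Qed.

Let inv_gross_le y : (gross j y)^-1 <= (1 + Xmin j)^-1.
Proof.
have Xj_gt0 : 0 < 1 + Xmin j by have := Xmin_gt j; lra.
by rewrite lef_pV2 ?posrE ?gross_gt0.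
Qed.

Let bounded_measurable_rel_gross l k : bounded_measurable (rel_gross l k).
Proof.
exact: (bounded_measurable_coord_prod _ _ iidX _ _ _ _ _ _ (measurable_gross l)
  measurable_inv_gross (gross_ge0 l) (gross_le l) inv_gross_ge0 inv_gross_le).
Qed.

Let expectr_prod_rel_gross l :
  expectr P (fun x => \prod_(k < n) rel_gross l k x) = expectr P (rel_gross l 0) ^+ n.
Proof.
exact: (expectr_prod_coord_prod _ _ iidX _ _ _ _ _ _ (measurable_gross l)
  measurable_inv_gross (gross_ge0 l) (gross_le l) inv_gross_ge0 inv_gross_le).
Qed.

Let wealth_ge l x : (1 + Xmin l) ^+ n <= wealth l x.
Proof.
rewrite -[n in _ ^+ n]card_ord -prodr_const; apply: ler_prod => k _.
by rewrite gross_ge andbT; have := Xmin_gt l; lra.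
Qed.

Let wealth_lb_gt0 l : 0 < (1 + Xmin l) ^+ n.
Proof. by rewrite exprn_gt0 //; have := Xmin_gt l; lra. Qed.

Let bounded_measurable_wealth l : bounded_measurable (wealth l).
Proof.
case: iidX => mX _ _; apply: bounded_measurable_prod => k; split.
  exact: measurableT_comp (measurable_gross l) (mX k l).
by exists (1 + Num.max (Xmax l) (Xmin l)) => x; rewrite ger0_norm ?gross_le.
Qed.

Let expectr_wealth_ratio l :
  expectr P (fun x => wealth l x / wealth j x) = expectr P (rel_gross l 0) ^+ n.
Proof.
rewrite -expectr_prod_rel_gross; congr expectr; apply: funext => x.
by rewrite /wealth -prodfV -big_split.
Qed.

Let X_clamped :
  {ae P, forall x (k : 'I_n) l, X k l x = clamp (Xmin l) (Xmax l) (X k l x)}.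
Proof.
apply: filter_forall => k; apply: filter_forall => l.
by apply: filterS (X_bounds k l) => x /clamp_id ->.
Qed.

Let g_nE K : simplexK K ->
  g_n P X n K = ((n%:R)^-1 * expectr P (log_wealth wealth K))%:E.
Proof.
move=> sK; case: iidX => mX _ _.
have bm_log_wealth := bounded_measurable_log_wealth _ _ bounded_measurable_wealth wealth_lb_gt0 wealth_ge sK.
rewrite /g_n (expectation_ae_eq P _ (log_wealth wealth K)) ?expectrE //; last first.
- apply: filterS X_clamped => x Xx; rewrite /log_wealth; congr ln.
  rewrite -[1 in LHS](proj2 sK) -big_split; apply: eq_bigr => l _ /=.
  rewrite /Xcal mulrBr mulr1 addrC subrK /wealth; congr (_ * _).
  by apply: eq_bigr => k _; rewrite /gross -Xx.
- by case: bm_log_wealth.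
apply: measurableT_comp; first exact: measurable_ln.
apply: measurable_funD; first exact: measurable_cst.
apply: measurable_sum => l; apply: measurable_funM; first exact: measurable_cst.
apply: measurable_funB; last exact: measurable_cst.
by apply: measurable_prod => k _; apply: measurable_funD; [exact: measurable_cst | exact: mX].
Qed.

Let expectation_ratio i :
  ('E_P[fun x => ((1 + X 0%N i x) / (1 + X 0%N j x))%R] = (expectr P (rel_gross i 0))%:E)%E.
Proof.
case: iidX => mX _ _; have [mrel _] := bounded_measurable_rel_gross i 0.
rewrite (expectation_ae_eq P _ (rel_gross i 0)) ?expectrE //.
  apply: measurable_funM; first by apply: measurable_funD => //; exact: measurable_cst.
  apply: measurableT_comp measurable_inv _.
  by apply: measurable_funD => //; exact: measurable_cst.
apply: filterS X_clamped => x /(_ (Ordinal n_gt0)) /= X0.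
by rewrite /rel_gross /coord_prod /gross -!X0.
Qed.

Lemma kelly_unit_vec_optimal_iff :
  (forall K, simplexK K -> (g_n P X n K <= g_n P X n (unit_vec j))%E) <->
  (forall i, i != j ->
     ('E_P[fun x => ((1 + X 0%N i x) / (1 + X 0%N j x))%R] <= 1)%E).
Proof.
have n_inv_gt0 : 0 < (n%:R)^-1 :> R by rewrite invr_gt0 ltr0n.
have g_nP K : simplexK K -> (g_n P X n K <= g_n P X n (unit_vec j))%E <->
    expectr P (log_wealth wealth K) <= expectr P (log_wealth wealth (unit_vec j)).
  by move=> sK; rewrite !g_nE ?lee_fin ?ler_pM2l //; exact: simplex_unit_vec.
split=> [opt i ij | ratio_le1 K sK].
  rewrite expectation_ratio lee_fin leNgt; apply/negP => ratio_gt1.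
  have : 1 < expectr P (fun x => wealth i x / wealth j x).
    by rewrite expectr_wealth_ratio exprn_egt1 // -lt0n.
  case/(exists_log_wealth_gt P _ _ bounded_measurable_wealth wealth_lb_gt0 wealth_ge) => K sK.
  by apply/negP; rewrite -leNgt; apply/(g_nP K sK)/opt.
apply/(g_nP K sK).
apply: (expectr_log_wealth_le P _ _ bounded_measurable_wealth wealth_lb_gt0 wealth_ge) => // l.
rewrite expectr_wealth_ratio; apply: exprn_ile1.
  by apply: expectr_ge0 => // x; rewrite mulr_ge0.
have [->|lj] := eqVneq l j; last by rewrite -lee_fin -expectation_ratio; exact: ratio_le1.
rewrite (_ : rel_gross j 0 = fun=> 1) ?expectr_cst //; apply: funext => x.
by rewrite /rel_gross /coord_prod mulfV // gt_eqF.
Qed.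

End kelly_criterion.

Theorem theorem2 (d : measure_display) (T : measurableType d) (R : realType)
  (P : probability T R) (m : nat) (X : nat -> 'I_m -> T -> R)
  (Xmin Xmax : 'I_m -> R) (n : nat) (j : 'I_m) :
  (2 <= m)%N ->
  iid_vectors P X ->
  (forall i, -1 < Xmin i) ->
  (forall k i, {ae P, forall x, Xmin i <= X k i x <= Xmax i}) ->
  (exists i0 (r : R), 0 <= r /\ forall k, {ae P, forall x, X k i0 x = r}) ->
  (1 <= n)%N ->
  ((forall K, simplexK K -> (g_n P X n K <= g_n P X n (unit_vec j))%E)
   <->
   (forall i, i != j ->
      ('E_P[fun x => ((1 + X 0%N i x) / (1 + X 0%N j x))%R] <= 1)%E)).
Proof.
move=> _ iidX Xmin_gt X_bounds _ n_gt0.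
exact: kelly_unit_vec_optimal_iff.
Qed.
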